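(* Consider the thresholding bandit setting and algorithm LSA with parameter $\alpha$ in the context, with $0<\alpha\le 8$ and $T\ge\max\{40/\alpha+1,40\}K$. Let $f(x)=\alpha x+\ln\alpha+0.5-\alpha$. For every arm $i\in B$ and every $\varkappa\ge\frac{\alpha-\ln\alpha-0.5}{\alpha}$ (with $\Pr(\mathcal{F}_{\Lambda-f(\varkappa)})>0$), \[ \Pr\big(T_i(T)<\lambda_i/20\,\big|\,\mathcal{F}_{\Lambda-f(\varkappa)}\big)\le\frac{\Pr(\overline{\mathcal{M}_{i,\varkappa}})}{\Pr(\mathcal{F}_{\Lambda-f(\varkappa)})}. \]
   Context: $K\ge2$ arms; arm $i$ has reward distribution $\mathcal{D}_i$ on $[0,1]$ with mean $\theta_i$; $\theta\in(0,1)$; $\Delta_i=|\theta_i-\theta|$ (convention $\ln(1/0)=+\infty$). For each $i$, rewards $X_{i,1},X_{i,2},\dots$ from successive pulls of arm $i$ are i.i.d. from $\mathcal{D}_i$, independent across arms; $\hat\Delta_{i,t}=|\frac1t\sum_{s\le t}X_{i,s}-\theta|$. $T_i(t)$ = number of pulls of arm $i$ in the first $t$ rounds; $\hat\Delta_i(t)=\hat\Delta_{i,T_i(t)}$. LSA (parameter $\alpha>0$, budget $T$): pull each arm once in rounds $1..K$; in round $t=K+1,\dots,T$ pull an arm minimizing $\alpha T_i(t-1)(\hat\Delta_i(t-1))^2+0.5\ln T_i(t-1)$. $\xi_i(t)=\alpha T_i(t)(\hat\Delta_i(t))^2+0.5\ln T_i(t)$ for $t\ge K$; $\mathcal{F}_C=\{\exists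 T',K\le T'\le T:\xi_i(T')>C\ \forall i\}$. $M=\max\{40/\alpha+1,40\}$; $g_i(x)=e^{2x}$ if $x\le\ln\Delta_i^{-1}$, $g_i(x)=\frac{x-\ln\Delta_i^{-1}+\alpha}{\alpha\Delta_i^2}$ otherwise; $\Lambda$ is the unique $x\ge0$ with $\sum_ig_i(x)=T/M$; $\lambda_i=g_i(\Lambda)$; $B=\{i:\ln\Delta_i^{-1}<\Lambda\}$. $\mathcal{M}_{i,\varkappa}$ is the event that for all integers $1\le t\le\lambda_i$, $|\hat\Delta_{i,t}-\Delta_i|\le\sqrt{(\lambda_i\Delta_i^2/5-\varkappa/2+\frac1{4\alpha}\ln\frac{\lambda_i}{t})/t}$; $\overline{\mathcal{M}_{i,\varkappa}}$ is its complement. *)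

From HB Require Import structures.
From mathcomp Require Import all_boot all_order all_algebra.
From mathcomp Require Import all_classical all_reals all_analysis.
Set Implicit Arguments. Unset Strict Implicit. Unset Printing Implicit Defensive.
Import Order.TTheory GRing.Theory Num.Theory.
Local Open Scope classical_set_scope.
Local Open Scope ring_scope.

Section LSA.
Context {R : realType}.

Definition mutually_independent {d} {Omega : measurableType d}
  (P : probability Omega R) {I : eqType} (Y : I -> Omega -> R) : Prop :=
  forall (J : seq I) (B : I -> set R),
    uniq J -> (forall j, j \in J -> measurable (B j)) ->
    P [set w | forall j, j \in J -> B j (Y j w)]
    = \big[*%E/1%E]_(j <- J) P (Y j @^-1` B j).

Definition cond_prob {d} {Omega : measurableType d}
  (P : probability Omega R) (A C : set Omega) : R :=
  fine (P (A `&` C)) / fine (P C).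

Definition npulls (K : nat) (A : nat -> 'I_K) (i : 'I_K) (t : nat) : nat :=
  \sum_(1 <= s < t.+1) (A s == i : nat).

(* \hat\Delta_{i,t} = |(1/t) sum_{s<=t} X_{i,s} - theta|, where x s = X_{i,s+1}. *)
Definition emp_gap (x : nat -> R) (theta : R) (t : nat) : R :=
  `| (t%:R)^-1 * (\sum_(s < t) x s) - theta |.

Definition xi (alpha theta : R) (K : nat) (A : nat -> 'I_K)
  (X : 'I_K -> nat -> R) (i : 'I_K) (t : nat) : R :=
  alpha * (npulls A i t)%:R * (emp_gap (X i) theta (npulls A i t)) ^+ 2
  + 2^-1 * ln ((npulls A i t)%:R).

(* The pull sequence A (rounds 1..T) is a run of LSA with parameter alpha and
   budget T on the reward table X (any tie-breaking). *)
Definition LSA_run (alpha theta : R) (K T : nat) (A : nat -> 'I_K)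
  (X : 'I_K -> nat -> R) : Prop :=
  (forall i, npulls A i K = 1%N) /\
  (forall t, (K < t <= T)%N ->
     forall j, xi alpha theta A X (A t) t.-1 <= xi alpha theta A X j t.-1).

Definition F_event {Omega : Type} (alpha theta : R) (K T : nat)
  (A : nat -> Omega -> 'I_K) (X : 'I_K -> nat -> Omega -> R) (C : R)
  : set Omega :=
  [set w | exists T', (K <= T' <= T)%N /\
     forall i, C < xi alpha theta (fun s => A s w) (fun j s => X j s w) i T'].

Definition Mconst (alpha : R) : R := Num.max (40 / alpha + 1) 40.

(* g_i, with Delta = Delta_i, convention ln(1/0) = +oo *)
Definition gfun (alpha Delta x : R) : R :=
  if (Delta == 0) || (x <= ln Delta^-1) then expR (2 * x)
  else (x - ln Delta^-1 + alpha) / (alpha * Delta ^+ 2).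

Definition ffun (alpha x : R) : R := alpha * x + ln alpha + 2^-1 - alpha.

(* Event M_{i,kappa} (for arm with reward sequence x, gap Delta, lambda_i = lam).
   The inequality |a| <= sqrt(y) is read as requiring y >= 0. *)
Definition M_event {Omega : Type} (alpha theta Delta lam kappa : R)
  (x : nat -> Omega -> R) : set Omega :=
  [set w | forall t : nat, (1 <= t)%N -> t%:R <= lam ->
     let y := (lam * Delta ^+ 2 / 5 - kappa / 2
               + (4 * alpha)^-1 * ln (lam / t%:R)) / t%:R in
     0 <= y /\ `| emp_gap (fun s => x s w) theta t - Delta | <= Num.sqrt y].

End LSA.

From HB Require Import structures.
From mathcomp Require Import all_boot all_order all_algebra.
From mathcomp Require Import all_classical all_reals all_analysis.
From mathcomp Require Import ring lra.
Import Order.TTheory GRing.Theory Num.Theory.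
Local Open Scope classical_set_scope.
Local Open Scope ring_scope.

(* On F_{Lambda - f(kappa)} some round T' >= K has xi_i(T') > Lambda - f(kappa).
   If moreover T_i(T) < lambda_i/20, then t = T_i(T') satisfies 1 <= t < lambda_i/20,
   so M_{i,kappa} bounds the empirical gap at sample sizes t and 20 t.  With
   u = alpha lambda_i Delta_i^2 = Lambda - ln(1/Delta_i) + alpha, the bound at t gives
   alpha t Dhat^2 <= 3u/20 + 3/2 (u/5 - alpha kappa/2 + ln(lambda_i/t)/4), the bound at
   20 t gives alpha kappa <= 2u/5 + ln(lambda_i/(20 t))/2, the ln t terms cancel, and
   ln u <= 9u/20 + ln 20/8 - 1/2 leaves xi_i(T') <= Lambda - f(kappa), a contradiction.
   So {T_i(T) < lambda_i/20} and F together imply the complement of M_{i,kappa}, and the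
   bound is monotonicity of P. *)

Lemma ln_le_div_sub1 (R : realType) (c u : R) :
  0 < c -> 0 < u -> ln u <= u / c - 1 + ln c.
Proof.
move=> c0 u0; have uc0 : 0 < u / c by rewrite divr_gt0.
have := @le_ln1Dx R (u / c - 1) ltac:(lra).
by rewrite addrC subrK ln_div ?posrE //; lra.
Qed.

(* (20/9)^8/20 < 30 < (5/4)^16 <= e^4, using 1 + 1/4 <= e^(1/4). *)
Lemma ln_20_9_le (R : realType) : ln (20/9 : R) <= 2^-1 + ln 20 / 8.
Proof.
have lnX : ln ((20/9)^+8/20 : R) = ln (20/9) *+ 8 - ln 20.
  by rewrite ln_div ?lnXn ?posrE ?exprn_gt0 //; lra.
have : ln ((20/9)^+8/20 : R) <= 4.
  rewrite -[X in _ <= X](expRK (4:R)) ler_ln ?posrE ?expR_gt0 ?divr_gt0 ?exprn_gt0 //.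
  apply: (@le_trans _ _ ((5/4)^+16)); first by rewrite !exprS expr0; lra.
  have -> : expR (4:R) = expR (16%:R * 4^-1) by congr expR; lra.
  rewrite expRM_natl; apply: lerXn2r; rewrite ?nnegrE ?expR_ge0 //.
  by apply: le_trans (expR_ge1Dx _); lra.
by rewrite lnX -mulr_natr; lra.
Qed.

Lemma ln_le_9_20 {R : realType} {u : R} :
  0 < u -> ln u <= 9 / 20 * u + ln 20 / 8 - 2^-1.
Proof.
move=> u0; have := @ln_le_div_sub1 R (20/9) u ltac:(lra) u0; have := ln_20_9_le R.
have -> : u / (20/9) = 9/20 * u by field.
lra.
Qed.

Lemma sqr_le_of_le_add {R : realFieldType} {g a b : R} :
  0 <= g -> g <= a + b -> g ^+ 2 <= 3 * a ^+ 2 + 3 / 2 * b ^+ 2.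
Proof.
move=> g0 gab; have : g ^+ 2 <= (a + b) ^+ 2 by rewrite lerXn2r // nnegrE; lra.
have := sqr_ge0 (2 * a - b); nra.
Qed.

Lemma leq_npulls (K : nat) (A : nat -> 'I_K) j m n : (m <= n)%N ->
  (npulls A j m <= npulls A j n)%N.
Proof.
move=> mn; rewrite /npulls [X in (_ <= X)%N](@big_cat_nat _ _ _ m.+1) //=.
exact: leq_addr.
Qed.

Lemma npulls0 (K : nat) (A : nat -> 'I_K) j : npulls A j 0 = 0%N.
Proof. by rewrite /npulls big_geq. Qed.

Lemma npullsS (K : nat) (A : nat -> 'I_K) j n :
  npulls A j n.+1 = (npulls A j n + (A n.+1 == j))%N.
Proof. by rewrite /npulls big_nat_recr. Qed.

Lemma gfun_above (R : realType) (alpha Delta x : R) :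
  Delta != 0 -> ln Delta^-1 < x ->
  gfun alpha Delta x = (x - ln Delta^-1 + alpha) / (alpha * Delta ^+ 2).
Proof. by move=> D0 xD; rewrite /gfun (negbTE D0) /= leNgt xD. Qed.

Section ConfidenceRadius.
Context {R : realType}.

Definition M_radius (alpha Delta lam kappa : R) (t : nat) : R :=
  (lam * Delta ^+ 2 / 5 - kappa / 2 + (4 * alpha)^-1 * ln (lam / t%:R)) / t%:R.

Lemma mul_M_radius alpha Delta lam kappa t : 0 < alpha -> 0 < lam -> (0 < t)%N ->
  alpha * t%:R * M_radius alpha Delta lam kappa t
  = alpha * lam * Delta ^+ 2 / 5 - alpha * kappa / 2 + (ln lam - ln t%:R) / 4.
Proof.
move=> a0 lam0 t0; have tp : (0 : R) < t%:R by rewrite ltr0n.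
by rewrite /M_radius ln_div ?posrE //; field; rewrite !gt_eqF.
Qed.

Lemma kappa_le_of_M_radius_20 alpha Delta lam kappa t :
  0 < alpha -> 0 < lam -> (0 < t)%N ->
  0 <= M_radius alpha Delta lam kappa (20 * t) ->
  alpha * kappa
  <= 2 / 5 * (alpha * lam * Delta ^+ 2) + (ln lam - ln 20 - ln t%:R) / 2.
Proof.
move=> a0 lam0 t0 rad0; have t20 : (0 < 20 * t)%N by rewrite muln_gt0.
have := mul_M_radius alpha Delta lam kappa (20 * t) a0 lam0 t20.
rewrite natrM lnM ?posrE ?ltr0n //.
have : 0 <= alpha * (20 * t)%:R * M_radius alpha Delta lam kappa (20 * t).
  by rewrite mulr_ge0 // mulr_ge0 ?ler0n // ltW.
rewrite natrM; lra.
Qed.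

Lemma xi_le_of_M_radius alpha Delta Lambda kappa t g :
  0 < alpha -> 0 < Delta -> ln Delta^-1 < Lambda ->
  let lam := gfun alpha Delta Lambda in
  let rad := M_radius alpha Delta lam kappa in
  (0 < t)%N -> t%:R < lam / 20 -> 0 <= rad t -> 0 <= rad (20 * t) ->
  0 <= g -> g <= Delta + Num.sqrt (rad t) ->
  alpha * t%:R * g ^+ 2 + 2^-1 * ln t%:R <= Lambda - ffun alpha kappa.
Proof.
move=> a0 D0 D_lt lam rad t0 t_small rad_t rad_20t g0 g_le.
have tp : (0 : R) < t%:R by rewrite ltr0n.
have D2 : 0 < alpha * Delta ^+ 2 by rewrite mulr_gt0 // exprn_gt0.
have u0 : 0 < Lambda - ln Delta^-1 + alpha by lra.
have lam_eq : lam = (Lambda - ln Delta^-1 + alpha) / (alpha * Delta ^+ 2).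
  by rewrite /lam gfun_above ?gt_eqF.
have lam0 : 0 < lam by rewrite lam_eq divr_gt0.
have u_eq : alpha * lam * Delta ^+ 2 = Lambda - ln Delta^-1 + alpha.
  by rewrite lam_eq; field; rewrite !gt_eqF.
have ln_lam : ln lam = ln (Lambda - ln Delta^-1 + alpha) - ln alpha + 2 * ln Delta^-1.
  rewrite lam_eq ln_div ?posrE // lnM ?posrE ?exprn_gt0 // lnXn // lnV ?posrE //.
  lra.
have g2 := sqr_le_of_le_add g0 g_le; rewrite sqr_sqrtr // in g2.
have at_g2 : alpha * t%:R * g ^+ 2
    <= 3 * (alpha * t%:R * Delta ^+ 2) + 3 / 2 * (alpha * t%:R * rad t).
  have : alpha * t%:R * g ^+ 2 <= alpha * t%:R * (3 * Delta ^+ 2 + 3 / 2 * rad t).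
    by rewrite ler_pM2l // mulr_gt0.
  lra.
have at_D2 : alpha * Delta ^+ 2 * t%:R < alpha * Delta ^+ 2 * (lam / 20).
  by rewrite ltr_pM2l.
have := mul_M_radius alpha Delta lam kappa t a0 lam0 t0.
have := kappa_le_of_M_radius_20 alpha Delta lam kappa t a0 lam0 t0 rad_20t.
have ln_alpha_le : ln alpha <= ln (Lambda - ln Delta^-1 + alpha).
  by rewrite ler_ln ?posrE //; lra.
have := ln_le_9_20 u0; rewrite ln_lam /ffun -/rad.
clearbody lam rad; lra.
Qed.

Lemma subset_npulls_F_notM (Omega : Type) alpha theta Delta Lambda kappa (K T : nat)
    (A : nat -> Omega -> 'I_K) (X : 'I_K -> nat -> Omega -> R) (i : 'I_K) :
  0 < alpha -> 0 < Delta -> ln Delta^-1 < Lambda ->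
  (forall w, npulls (fun t => A t w) i K = 1%N) ->
  let lam := gfun alpha Delta Lambda in
  [set w | (npulls (fun t => A t w) i T)%:R < lam / 20]
    `&` F_event alpha theta T A X (Lambda - ffun alpha kappa)
  `<=` ~` M_event alpha theta Delta lam kappa (X i).
Proof.
move=> a0 D0 D_lt pulled_once lam w [small [T' [/andP[KT' T'T] xi_big]]] hM.
have := xi_big i; rewrite /xi; set t := npulls _ i T'.
have t0 : (0 < t)%N by rewrite -(pulled_once w) leq_npulls.
have t_small : t%:R < lam / 20.
  by apply: (le_lt_trans _ small); rewrite ler_nat leq_npulls.
have tp : (0 : R) < t%:R by rewrite ltr0n.
set g := emp_gap _ theta t; pose rad := M_radius alpha Delta lam kappa.
have [rad_t gap_t] : 0 <= rad t /\ `|g - Delta| <= Num.sqrt (rad t).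
  exact: hM t t0 ltac:(lra).
have rad_20t : 0 <= rad (20 * t).
  by have [] := hM (20 * t)%N ltac:(by rewrite muln_gt0) ltac:(rewrite natrM; lra).
have g_le : g <= Delta + Num.sqrt (rad t) by have := ler_norm (g - Delta); lra.
have := xi_le_of_M_radius alpha Delta Lambda kappa t g a0 D0 D_lt t0 t_small
  rad_t rad_20t (normr_ge0 _) g_le.
lra.
Qed.

End ConfidenceRadius.

Section Measurability.
Context {R : realType} {d : measure_display} {Omega : measurableType d}.

Lemma measurable_set_ltr (f g : Omega -> R) :
  measurable_fun setT f -> measurable_fun setT g -> measurable [set w | f w < g w].
Proof.
move=> mf mg; have := measurable_realfun.measurable_fun_ltr mf mg measurableT.
by move=> /(_ [set true] I); rewrite setTI.
Qed.

Lemma measurable_set_ler (f g : Omega -> R) :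
  measurable_fun setT f -> measurable_fun setT g -> measurable [set w | f w <= g w].
Proof.
move=> mf mg; have := measurable_realfun.measurable_fun_ler mf mg measurableT.
by move=> /(_ [set true] I); rewrite setTI.
Qed.

Lemma measurable_set_cst (P : Prop) : measurable [set _ : Omega | P].
Proof.
have [p|np] := pselect P.
  by rewrite (_ : [set _ | P] = setT) //; apply/seteqP; split.
by rewrite (_ : [set _ | P] = set0) //; apply/seteqP; split.
Qed.

Lemma measurable_fun_at_index d' (T' : measurableType d')
    (n : Omega -> nat) (h : nat -> Omega -> T') :
  (forall k, measurable [set w | n w = k]) -> (forall k, measurable_fun setT (h k)) ->
  measurable_fun setT (fun w => h (n w) w).
Proof.
move=> mn mh _ B mB; rewrite setTI.
have -> : (fun w => h (n w) w) @^-1` B = \bigcup_k ([set w | n w = k] `&` h k @^-1` B).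
  by apply/seteqP; split => [w Bw | w [k _ [/= <-]]] //; exists (n w).
apply: bigcupT_measurable => k; apply: measurableI => //.
by rewrite -[X in measurable X]setTI; apply: mh.
Qed.

Variables (K : nat) (A : nat -> Omega -> 'I_K) (X : 'I_K -> nat -> Omega -> R).
Hypotheses (mX : forall j s, measurable_fun setT (X j s))
  (mA : forall t j, measurable [set w | A t w = j]).

Lemma measurable_fun_npulls j n :
  measurable_fun setT (fun w => (npulls (fun t => A t w) j n)%:R : R).
Proof.
elim: n => [|n IHn].
  by under eq_fun do rewrite npulls0; exact: measurable_cst.
under eq_fun do rewrite npullsS natrD.
apply: measurable_realfun.measurable_funD => //.
rewrite (_ : (fun w => _) = \1_[set w | A n.+1 w = j]).
  exact: measurable_realfun.measurable_indic.
apply/funext => w; rewrite indicE.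
by case: eqP => Aw; [rewrite mem_set | rewrite memNset].
Qed.

Lemma measurable_npulls_eq j n k :
  measurable [set w | npulls (fun t => A t w) j n = k].
Proof.
have := measurable_fun_npulls j n measurableT _ (measurable_set1 (k%:R : R)).
rewrite setTI; congr measurable; apply/seteqP; split => w /=.
  by move/eqP; rewrite eqr_nat => /eqP.
by move=> ->.
Qed.

Lemma measurable_fun_emp_gap j theta t :
  measurable_fun setT (fun w => emp_gap (fun s => X j s w) theta t).
Proof.
apply: measurableT_comp; first exact: measurable_realfun.normr_measurable.
apply: measurable_realfun.measurable_funB; last exact: measurable_cst.
apply: measurable_realfun.measurable_funM; first exact: measurable_cst.
by apply: measurable_sum => s; apply: mX.
Qed.

Lemma measurable_fun_xi alpha theta j t :
  measurable_fun setT
    (fun w => xi alpha theta (fun s => A s w) (fun j s => X j s w) j t).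
Proof.
apply: (@measurable_fun_at_index _ _ (fun w => npulls (fun s => A s w) j t)
  (fun k w => alpha * k%:R * emp_gap (fun s => X j s w) theta k ^+ 2
             + 2^-1 * ln k%:R)).
  exact: measurable_npulls_eq.
move=> k; apply: measurable_realfun.measurable_funD; last exact: measurable_cst.
apply: measurable_realfun.measurable_funM; first exact: measurable_cst.
exact/measurable_realfun.measurable_funX/measurable_fun_emp_gap.
Qed.

Lemma measurable_F_event alpha theta T C :
  measurable (F_event alpha theta T A X C).
Proof.
rewrite (_ : F_event _ _ _ _ _ _ = \bigcup_(T' in [set T' | (K <= T' <= T)%N])
   \bigcap_(j in [set: 'I_K])
     [set w | C < xi alpha theta (fun s => A s w) (fun j s => X j s w) j T']).
  apply: bigcup_measurable => T' _.
  apply: fin_bigcap_measurable; first exact: finite_finset.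
  move=> j _; apply: measurable_set_ltr; first exact: measurable_cst.
  exact: measurable_fun_xi.
apply/seteqP; split => w /=.
  by move=> [T' [T'_range xi_big]]; exists T' => // j _; exact: xi_big.
by move=> [T' T'_range xi_big]; exists T'; split => // j; exact: xi_big.
Qed.

Lemma measurable_M_event alpha theta Delta lam kappa j :
  measurable (M_event alpha theta Delta lam kappa (X j)).
Proof.
pose rad := M_radius alpha Delta lam kappa.
rewrite (_ : M_event _ _ _ _ _ _ = \bigcap_(t in [set t | (1 <= t)%N /\ t%:R <= lam])
   ([set _ | 0 <= rad t]
    `&` [set w | `|emp_gap (fun s => X j s w) theta t - Delta| <= Num.sqrt (rad t)])).
  apply: bigcap_measurableType => t _.
  apply: measurableI; first exact: measurable_set_cst.
  apply: measurable_set_ler; last exact: measurable_cst.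
  apply: measurableT_comp; first exact: measurable_realfun.normr_measurable.
  apply: measurable_realfun.measurable_funB; last exact: measurable_cst.
  exact: measurable_fun_emp_gap.
apply/seteqP; split => w /=.
  by move=> Mw t [t1 t_le]; exact: Mw t t1 t_le.
by move=> Mw t t1 t_le; exact: Mw t (conj t1 t_le).
Qed.

End Measurability.

Lemma cond_prob_le_of_subset (R : realType) d (Omega : measurableType d)
    (P : probability Omega R) (S C B : set Omega) :
  measurable S -> measurable C -> measurable B -> S `&` C `<=` B ->
  cond_prob P S C <= fine (P B) / fine (P C).
Proof.
move=> mS mC mB SCB; rewrite /cond_prob ler_wpM2r ?invr_ge0 ?fine_ge0 //.
apply: fine_le; rewrite ?fin_num_measure //; first exact: measurableI.
by apply: le_measure => //; rewrite inE //; exact: measurableI.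
Qed.

Theorem corollary1 (R : realType) (d : measure_display) (Omega : measurableType d)
  (P : probability Omega R) (K T : nat) (alpha theta : R)
  (thetas : 'I_K -> R) (X : 'I_K -> nat -> Omega -> R)
  (A : nat -> Omega -> 'I_K) (Lambda kappa : R) (i : 'I_K) :
  (2 <= K)%N ->
  0 < theta < 1 ->
  (* rewards: X i s = X_{i,s+1}, measurable, i.i.d. per arm, independent across arms *)
  (forall j s, measurable_fun setT (X j s)) ->
  mutually_independent P (fun p : 'I_K * nat => X p.1 p.2) ->
  (forall j s (B : set R), measurable B ->
     P (X j s @^-1` B) = P (X j 0%N @^-1` B)) ->
  (forall j s, P [set w | 0 <= X j s w <= 1] = 1%E) ->
  (forall j, ('E_P[X j 0%N] = (thetas j)%:E)%E) ->
  (* the pulls A follow LSA with parameter alpha and budget T *)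
  (forall t j, measurable [set w | A t w = j]) ->
  (forall w, LSA_run alpha theta T (fun t => A t w) (fun j s => X j s w)) ->
  0 < alpha <= 8 ->
  Mconst alpha * K%:R <= T%:R ->
  (* Lambda is the (unique) x >= 0 with sum_j g_j(x) = T/M *)
  0 <= Lambda ->
  \sum_(j < K) gfun alpha `|thetas j - theta| Lambda = T%:R / Mconst alpha ->
  (* i in B *)
  `|thetas i - theta| != 0 -> ln (`|thetas i - theta|^-1) < Lambda ->
  (alpha - ln alpha - 2^-1) / alpha <= kappa ->
  let F := F_event alpha theta T A X (Lambda - ffun alpha kappa) in
  let lam := gfun alpha `|thetas i - theta| Lambda in
  (0 < P F)%E ->
  cond_prob P [set w | (npulls (fun t => A t w) i T)%:R < lam / 20] F
  <= fine (P (~` M_event alpha theta `|thetas i - theta| lam kappa (X i))) / fine (P F).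
Proof.
(* The bound comes from an inclusion of events that holds pointwise. *)
move=> _ _ mX _ _ _ _ mA run /andP[alpha_gt0 _] _ _ _ Di Di_lt _ F lam _.
have D_gt0 : 0 < `|thetas i - theta| by rewrite lt_def Di normr_ge0.
apply: cond_prob_le_of_subset.
- apply: measurable_set_ltr; last exact: measurable_cst.
  exact: measurable_fun_npulls.
- exact: measurable_F_event.
- exact/measurableC/measurable_M_event.
- by apply: subset_npulls_F_notM => // w; have [] := run w.
Qed.
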